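(* Let $\Gamma$ be a Taylor graph with vertex set $X$. For each $x\in X$, the Terwilliger algebra $T(x)$ of $\Gamma$ has dimension $\dim(T(x))=24$.
   Context: A Taylor graph is a distance-regular graph with intersection array $\{k,b,1;1,b,k\}$ where $b<k-1$; it has diameter $3$. Let $A$ be its adjacency matrix, $\partial$ its distance, and for $x\in X$ and $0\le i\le 3$ let $E^*_i(x)$ be the diagonal matrix with $(E^*_i(x))_{yy}=1$ if $\partial(x,y)=i$ and $0$ otherwise. The Terwilliger algebra $T(x)$ is the subalgebra of $\mathrm{Mat}_X(\mathbb{C})$ generated by $A,E^*_0(x),\dots,E^*_3(x)$; its dimension is as a complex vector space. *)

From HB Require Import structures.
From mathcomp Require Import all_boot all_order all_algebra all_field.
Set Implicit Arguments. Unset Strict Implicit. Unset Printing Implicit Defensive.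
Import Order.TTheory GRing.Theory Num.Theory.

Section Graph.
Variable T : finType.
Variable e : rel T.

Definition nbr_step (S : {set T}) : {set T} :=
  S :|: [set z | [exists y in S, e y z]].

Definition ball (k : nat) (x : T) : {set T} := iter k nbr_step [set x].

(* graph distance: least k with y in ball k x (returns #|T| if y unreachable;
   irrelevant below since the graphs considered are connected) *)
Definition gdist (x y : T) : nat := find (fun k => y \in ball k x) (iota 0 #|T|).

Definition simple_graph : Prop :=
  (forall x y, e x y = e y x) /\ (forall x, ~~ e x x).

(* distance-regular graph of diameter d with intersection array
   {b_0,...,b_{d-1}; c_1,...,c_d}, given by bs = [:: b_0; ...; b_{d-1}],
   cs = [:: c_1; ...; c_d]. *)
Definition distance_regular_array (d : nat) (bs cs : seq nat) : Prop :=
  [/\ simple_graph, size bs = d, size cs = d,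
      (forall x y, gdist x y <= d) & (exists x y, gdist x y = d)] /\
  [/\
      (forall x y, 1 <= gdist x y <= d ->
         #|[set z | e y z & gdist x z == (gdist x y).-1]| = nth 0 cs (gdist x y).-1)
    & (forall x y, (gdist x y < d)%N ->
         #|[set z | e y z & gdist x z == (gdist x y).+1]| = nth 0 bs (gdist x y))].

Definition is_taylor : Prop :=
  exists k b : nat, (b + 1 < k)%N /\
    distance_regular_array 3 [:: k; b; 1] [:: 1; b; k].

End Graph.

Local Open Scope ring_scope.

Section Terwilliger.
Variable N : nat.
Variable e : rel 'I_N.

Definition adj_mx : 'M[algC]_N := \matrix_(i, j) (e i j)%:R.

Definition dual_idem (x : 'I_N) (i : nat) : 'M[algC]_N :=
  \matrix_(y, z) ((y == z) && (gdist e x y == i))%:R.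

Definition terwilliger_gens (x : 'I_N) : seq 'M[algC]_N :=
  [:: adj_mx; dual_idem x 0; dual_idem x 1; dual_idem x 2; dual_idem x 3].
End Terwilliger.

Definition is_generated_subalgebra (n : nat) (gens : seq 'M[algC]_n)
    (V : 'A[algC]_n) : Prop :=
  [/\ (1%:M \in V)%MS,
      (forall g, g \in gens -> (g \in V)%MS),
      (V * V <= V)%MS
    & (forall W : 'A[algC]_n, (1%:M \in W)%MS ->
         (forall g, g \in gens -> (g \in W)%MS) -> (W * W <= W)%MS ->
         (V <= W)%MS)].

(* A Taylor graph is an antipodal double cover of a complete graph: each vertex
   z has a unique antipode z' at distance 3 and d(y, z') = 3 - d(y, z), so the
   distance-3 matrix P is an involutive permutation matrix.  Fix x and let
   M_ijh = E*_i A_h E*_j, the indicator of the pairs (y, z) with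
   (d(x, y), d(x, z), d(y, z)) = (i, j, h).  Multiplying by P on either side
   reflects two of the indices, so the nonzero M_ijh are the 24 matrices
   P^a M P^c with M one of the six nonzero M_ijh with i, j <= 1; having disjoint
   nonempty supports, they are linearly independent.  Their span contains A and
   the E*_i and lies in every subalgebra containing them.  It is closed under
   products because, after reflecting, the products of the six small matrices
   are given by the intersection numbers, except those of the adjacency matrix
   D of the local graph at x and of its complement C, which follow from
   C = J - E*_1 - D and the value of D^2 + C^2. *)

From mathcomp Require Import all_boot all_order all_algebra all_field.
From mathcomp Require Import zify ring.
Set Implicit Arguments. Unset Strict Implicit. Unset Printing Implicit Defensive.
Import Order.TTheory GRing.Theory Num.Theory.

Section Distance.
Variables (T : finType) (e : rel T).
Local Notation d := (gdist e).

Lemma ball0 y : ball e 0 y = [set y]. Proof. by []. Qed.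

Lemma ballS m y : ball e m.+1 y = nbr_step e (ball e m y). Proof. by []. Qed.

Lemma mem_ball_add m n y z w :
  z \in ball e m y -> w \in ball e n z -> w \in ball e (m + n) y.
Proof.
move=> zy; elim: n w => [|n IHn] w; first by rewrite ball0 inE addn0 => /eqP ->.
rewrite addnS ballS !inE => /orP[/IHn -> // | /existsP[u /andP[/IHn uy euw]]].
by apply/orP; right; apply/existsP; exists u; rewrite uy.
Qed.

Lemma gdist_leq m y z : z \in ball e m y -> d y z <= m.
Proof.
move=> zy; rewrite /gdist; have [ltmT | leTm] := ltnP m #|T|.
  by rewrite leqNgt; apply/negP => /(before_find 0); rewrite nth_iota // add0n zy.
by apply: leq_trans (find_size _ _) _; rewrite size_iota.
Qed.

Lemma gdist_refl y : d y y = 0.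
Proof. by apply/eqP; rewrite -leqn0 gdist_leq // ball0 inE. Qed.

Lemma mem_ball_gdist y z : d y z < #|T| -> z \in ball e (d y z) y.
Proof.
move=> ltdT; have hasz : has (fun m => z \in ball e m y) (iota 0 #|T|).
  by rewrite has_find size_iota.
by have := nth_find 0 hasz; rewrite nth_iota.
Qed.

Hypothesis e_sym : symmetric e.

Lemma mem_ball_sym m y z : z \in ball e m y -> y \in ball e m z.
Proof.
elim: m z => [|m IHm] z; first by rewrite ball0 !inE eq_sym.
rewrite ballS inE => /orP[/IHm zy | ]; first by rewrite ballS inE zy.
rewrite inE => /existsP[u /andP[/IHm yu euz]].
have uz : u \in ball e 1 z.
  by rewrite ballS ball0 !inE; apply/orP; right; apply/existsP; exists z; rewrite inE eqxx e_sym.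
by rewrite -add1n (mem_ball_add uz yu).
Qed.

End Distance.

Definition taylor_array (T : finType) (e : rel T) (k b : nat) :=
  b + 1 < k /\ distance_regular_array e 3 [:: k; b; 1] [:: 1; b; k].

Section TaylorGraph.
Variables (T : finType) (e : rel T) (k b : nat).
Hypothesis taylor : taylor_array e k b.
Local Notation d := (gdist e).

Let b1_lt_k : b + 1 < k.
Proof. by case: taylor. Qed.

Let e_sym : symmetric e.
Proof. by case: taylor => _ -[[[sym _] _ _ _ _] _]. Qed.

Let e_irr : irreflexive e.
Proof. by case: taylor => _ -[[[_ irr] _ _ _ _] _] x; apply/negbTE. Qed.

Let gdist_diam : exists y z, d y z = 3.
Proof. by case: taylor => _ -[[_ _ _ _ diam] _]. Qed.

Let card_down y z : 1 <= d y z <= 3 ->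
  #|[set w | e z w & d y w == (d y z).-1]| = nth 0 [:: 1; b; k] (d y z).-1.
Proof. by case: taylor => _ -[_ [down _]]; exact: down. Qed.

Let card_up y z : d y z < 3 ->
  #|[set w | e z w & d y w == (d y z).+1]| = nth 0 [:: k; b; 1] (d y z).
Proof. by case: taylor => _ -[_ [_ up]]; exact: up. Qed.

Lemma gdist_le3 y z : d y z <= 3.
Proof. by case: taylor => _ -[[_ _ _ le3 _] _]; exact: le3. Qed.

Lemma card_gt3 : 3 < #|T|.
Proof.
have [y [z dyz]] := gdist_diam; have := @card_up y y; rewrite gdist_refl => /(_ isT) /=.
set S := [set w | _ & _] => cardS.
have yS : y \notin S by rewrite inE e_irr.
have zS : z \notin S by rewrite inE dyz andbF.
have yz : y != z by apply/eqP => yz; move: dyz; rewrite yz gdist_refl.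
have := max_card (y |: (z |: S)).
by rewrite !cardsU1 cardS in_setU1 negb_or yz (negbTE yS) (negbTE zS) /=; lia.
Qed.

Lemma ball_gdist y z : z \in ball e (d y z) y.
Proof. exact/mem_ball_gdist/(leq_ltn_trans (gdist_le3 y z) card_gt3). Qed.

Lemma gdist_eq0 y z : (d y z == 0) = (y == z).
Proof.
apply/eqP/eqP => [dyz | <-]; last exact: gdist_refl.
by have := ball_gdist y z; rewrite dyz ball0 inE => /eqP.
Qed.

Lemma gdist_sym y z : d y z = d z y.
Proof. by apply/eqP; rewrite eqn_leq !gdist_leq // mem_ball_sym // ball_gdist. Qed.

Lemma gdist_triangle y z w : d y w <= d y z + d z w.
Proof. exact/gdist_leq/(mem_ball_add (ball_gdist y z) (ball_gdist z w)). Qed.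

Lemma gdist1 y z : (d y z == 1) = e y z.
Proof.
apply/idP/idP => [/eqP dyz | eyz].
  have := ball_gdist y z; rewrite dyz ballS ball0 !inE => /orP[/eqP yz | ].
    by move: dyz; rewrite yz gdist_refl.
  by case/existsP => u; rewrite inE => /andP[/eqP ->].
have yz : y != z by apply/eqP => yz; move: eyz; rewrite yz e_irr.
rewrite eqn_leq lt0n gdist_eq0 yz andbT gdist_leq // ballS ball0 !inE.
by apply/orP; right; apply/existsP; exists y; rewrite inE eqxx.
Qed.

Lemma card_nbr z : #|[set w | e z w]| = k.
Proof.
have := @card_up z z; rewrite gdist_refl => /(_ isT) /= <-.
by apply: eq_card => w; rewrite !inE gdist1 andbb.
Qed.

Lemma gdist_nbr y z w : e z w -> (d y w <= d y z + 1) && (d y z <= d y w + 1).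
Proof.
rewrite -gdist1 => /eqP dzw; have := gdist_triangle y z w; have := gdist_triangle y w z.
by rewrite dzw (gdist_sym w z) dzw => *; apply/andP; split; lia.
Qed.

Lemma gdist_pred y z m : d y z = m.+1 -> exists2 w, e w z & d y w = m.
Proof.
move=> dyz; have := ball_gdist y z; rewrite dyz ballS inE => /orP[/gdist_leq | ].
  by rewrite dyz ltnn.
rewrite inE => /existsP[w /andP[/gdist_leq dyw ewz]]; exists w => //.
by have := gdist_triangle y w z; move: ewz; rewrite -gdist1 dyz => /eqP ->; lia.
Qed.

Lemma b_gt0 : 0 < b.
Proof.
have [y [z /gdist_pred [w _ dyw]]] := gdist_diam.
have := @card_down y w; rewrite dyw => /(_ isT) /= <-.
have [u euw dyu] := gdist_pred dyw.
by apply/card_gt0P; exists u; rewrite inE e_sym euw dyu.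
Qed.

(* [nbr_count g h] is the intersection number p^g_{1h}: when d(y, z) = g, the
   vertex z has exactly that many neighbours at distance h from y. *)
Definition bnum g := nth 0 [:: k; b; 1] g.
Definition cnum g := nth 0 [:: 0; 1; b; k] g.
Definition nbr_count g h :=
  if h == g.+1 then bnum g else if h.+1 == g then cnum g
  else if h == g then k - bnum g - cnum g else 0.

Lemma sum_nbr_count g : g <= 3 -> \sum_(h < 4) nbr_count g h = k.
Proof.
rewrite !big_ord_recr big_ord0 /nbr_count /bnum /cnum /=.
by case: g => [|[|[|[|]]]] //= _; lia.
Qed.

Lemma card_nbr_up y z : #|[set w | e z w & d y w == (d y z).+1]| = bnum (d y z).
Proof.
have := gdist_le3 y z; rewrite leq_eqVlt => /orP[/eqP d3 | /card_up //].
rewrite d3; apply: eq_card0 => w; rewrite !inE; apply/andP => -[_ /eqP dyw].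
by have := gdist_le3 y w; rewrite dyw.
Qed.

Lemma card_nbr_down y z : 0 < d y z ->
  #|[set w | e z w & d y w == (d y z).-1]| = cnum (d y z).
Proof. by move=> pos; rewrite card_down ?pos ?gdist_le3 //; case: (d y z) pos. Qed.

Lemma card_nbr_off_diag y z h : h != d y z ->
  #|[set w | e z w & d y w == h]| = nbr_count (d y z) h.
Proof.
move=> ne; rewrite /nbr_count; case: eqP => [-> | ne_up]; first exact: card_nbr_up.
case: eqP => [eq_dn | ne_dn].
  by rewrite -[h]/(h.+1.-1) eq_dn card_nbr_down // -eq_dn.
rewrite (negPf ne); apply: eq_card0 => w; rewrite !inE.
by apply/andP => -[/(gdist_nbr y) /andP[lo hi] /eqP dyw]; lia.
Qed.

Lemma card_nbr_levels y z : \sum_(h < 4) #|[set w | e z w & d y w == h]| = k.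
Proof.
rewrite -(card_nbr z) -sum1_card (partition_big (fun w => inord (d y w) : 'I_4) predT) //=.
apply: eq_bigr => h _; rewrite sum1_card; apply: eq_card => w; rewrite !inE.
by rewrite unfold_in !inE -val_eqE /= inordK ?ltnS ?gdist_le3.
Qed.

Lemma card_nbr_dist y z h : #|[set w | e z w & d y w == h]| = nbr_count (d y z) h.
Proof.
have [-> {h} | ] := eqVneq h (d y z); last exact: card_nbr_off_diag.
have g4 : d y z < 4 by rewrite ltnS gdist_le3.
have := card_nbr_levels y z; rewrite -(sum_nbr_count (gdist_le3 y z)).
rewrite (bigD1 (Ordinal g4)) // [RHS](bigD1 (Ordinal g4)) //=.
have -> // : \sum_(h < 4 | h != Ordinal g4) #|[set w | e z w & d y w == h]| =
             \sum_(h < 4 | h != Ordinal g4) nbr_count (d y z) h.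
  apply: eq_bigr => h ne; apply: card_nbr_off_diag.
  by apply: contraNneq ne => eqh; apply/eqP/val_inj.
by move/addIn.
Qed.

Lemma exists_nbr_at_dist y z h : e y z -> 0 < h < 3 -> exists2 w, e y w & d z w = h.
Proof.
rewrite -gdist1 => /eqP dyz h_range.
have : 0 < #|[set w | e y w & d z w == h]|.
  rewrite card_nbr_dist (gdist_sym z y) dyz /nbr_count /bnum /cnum.
  by case: h h_range => [|[|[|]]] //= _; [lia | exact: b_gt0].
by case/card_gt0P => w; rewrite inE => /andP[eyw /eqP]; exists w.
Qed.

End TaylorGraph.

Definition reflect3 (a : bool) n := if a then (3 - n)%N else n.

Lemma reflect3_le a n : (n <= 3 -> reflect3 a n <= 3)%N.
Proof. by case: a => //= _; apply: leq_subr. Qed.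

Lemma subn_reflect3 a n : (n <= 3 -> 3 - reflect3 a n = reflect3 (~~ a) n)%N.
Proof. by case: a => //= ?; rewrite subKn. Qed.

Lemma reflect3_inj a n n' : (n <= 3 -> n' <= 3 -> reflect3 a n = reflect3 a n' -> n = n')%N.
Proof. by case: a => //=; lia. Qed.

Lemma reflect3_small_inj a a' n n' :
  (n <= 1 -> n' <= 1 -> reflect3 a n = reflect3 a' n' -> a = a' /\ n = n')%N.
Proof. by case: a a' => -[] /= ? ? ?; first [by split; lia | exfalso; lia]. Qed.

Lemma subn3_eq m n : (m <= 3 -> n <= 3 -> (3 - m == n) = (m == 3 - n))%N.
Proof. by move=> ? ?; apply/eqP/eqP; lia. Qed.

Local Open Scope ring_scope.

Section SpanMx.
Variables (F : fieldType) (n : nat).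

Lemma memmxD m (R : 'A[F]_(m, n)) A B : (A \in R)%MS -> (B \in R)%MS -> (A + B \in R)%MS.
Proof. by move=> RA RB; rewrite linearD addmx_sub. Qed.

Lemma memmxZ m (R : 'A[F]_(m, n)) a A : (A \in R)%MS -> (a *: A \in R)%MS.
Proof. by move=> RA; rewrite linearZ scalemx_sub. Qed.

Lemma memmxN m (R : 'A[F]_(m, n)) A : (A \in R)%MS -> (- A \in R)%MS.
Proof. by move=> RA; rewrite -scaleN1r memmxZ. Qed.

Lemma memmx_sum m (R : 'A[F]_(m, n)) (I : Type) (r : seq I) (P : pred I) (A : I -> 'M_n) :
  (forall i, P i -> (A i \in R)%MS) -> (\sum_(i <- r | P i) A i \in R)%MS.
Proof. by move=> RA; rewrite linear_sum summx_sub. Qed.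

Variables (I : finType) (B : I -> 'M[F]_n).

Definition span_mx : 'A[F]_(#|I|, n) := \matrix_(r < #|I|) mxvec (B (enum_val r)).

Lemma mem_span_mx c : (B c \in span_mx)%MS.
Proof. by apply: (eq_row_sub (enum_rank c)); rewrite rowK enum_rankK. Qed.

Lemma span_mx_coord A :
  (A \in span_mx)%MS -> exists a : 'I_#|I| -> F, A = \sum_r a r *: B (enum_val r).
Proof.
case/submxP => u defA; exists (fun r => u 0 r).
rewrite -[A]mxvecK defA mulmx_sum_row linear_sum.
by apply: eq_bigr => r _; rewrite rowK linearZ /= mxvecK.
Qed.

Lemma span_mx_linear_closed (f : {linear 'M[F]_n -> 'M[F]_n}) :
  (forall c, (f (B c) \in span_mx)%MS) ->
  forall A, (A \in span_mx)%MS -> (f A \in span_mx)%MS.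
Proof.
move=> fB A /span_mx_coord[a ->]; rewrite linear_sum memmx_sum // => r _.
by rewrite linearZ memmxZ.
Qed.

Lemma span_mx_mul_closed :
  (forall c c', (B c *m B c' \in span_mx)%MS) ->
  forall A1 A2, (A1 \in span_mx)%MS -> (A2 \in span_mx)%MS -> (A1 *m A2 \in span_mx)%MS.
Proof.
move=> BB A1 A2 /span_mx_coord[a1 ->] /span_mx_coord[a2 ->].
rewrite mulmx_suml memmx_sum // => r1 _; rewrite mulmx_sumr memmx_sum // => r2 _.
by rewrite -scalemxAl -scalemxAr !memmxZ.
Qed.

Lemma rank_span_mx :
  (forall c, exists p : 'I_n * 'I_n, forall c', B c' p.1 p.2 = (c' == c)%:R) ->
  \rank span_mx = #|I|.
Proof.
move=> /fin_all_exists[p Bp].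
pose pos (r : 'I_#|I|) := mxvec_index (p (enum_val r)).1 (p (enum_val r)).2.
pose S : 'M[F]_(n * n, #|I|) := \matrix_(s, r) (s == pos r)%:R.
have BS : span_mx *m S = 1%:M.
  apply/matrixP => r r'; rewrite !mxE (bigD1 (pos r')) //= big1 => [|s ne]; last first.
    by rewrite !mxE (negPf ne) mulr0.
  by rewrite !mxE eqxx mulr1 mxvecE Bp (inj_eq enum_val_inj) addr0.
apply/eqP; rewrite eqn_leq rank_leq_row /= -{1}(mxrank1 F #|I|) -BS.
exact: mxrankM_maxl.
Qed.

End SpanMx.

Lemma sum_nat_of_bool (R : pzSemiRingType) (I : finType) (P : pred I) :
  \sum_i ((P i)%:R : R) = #|[set i | P i]|%:R.
Proof.
rewrite (eq_bigr (fun i => if P i then 1 else 0)) => [|i _]; last by case: (P i).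
by rewrite -big_mkcond sumr_const cardsE.
Qed.

Section DistanceMatrices.
Variables (N : nat) (e : rel 'I_N) (k b : nat).
Hypothesis taylor : taylor_array e k b.
Local Notation d := (gdist e).

Let b1_lt_k : (b + 1 < k)%N. Proof. by case: taylor. Qed.

Let b_neq0 : b%:R != 0 :> algC.
Proof. by rewrite pnatr_eq0 -lt0n (b_gt0 taylor). Qed.

Let k_neq0 : k%:R != 0 :> algC.
Proof. by rewrite pnatr_eq0 -lt0n; lia. Qed.

Let k_eq : k%:R = (k - b - 1)%N%:R + b%:R + 1 :> algC.
Proof. by rewrite -natrD natr1; congr _%:R; lia. Qed.

Definition dist_mx h : 'M[algC]_N := \matrix_(y, z) (d y z == h)%:R.

Lemma adj_mx_dist : adj_mx e = dist_mx 1.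
Proof. by apply/matrixP => y z; rewrite !mxE (gdist1 taylor). Qed.

Lemma dist_mx0 : dist_mx 0 = 1%:M.
Proof. by apply/matrixP => y z; rewrite !mxE (gdist_eq0 taylor). Qed.

Lemma mul_adj_dist_mx h :
  dist_mx 1 *m dist_mx h = \matrix_(y, z) (nbr_count k b (d y z) h)%:R.
Proof.
apply/matrixP => y z; rewrite !mxE.
under eq_bigr do rewrite !mxE -natrM mulnb (gdist1 taylor) (gdist_sym taylor _ z).
by rewrite sum_nat_of_bool (card_nbr_dist taylor) (gdist_sym taylor).
Qed.

Lemma mul_dist_mx11 : dist_mx 1 *m dist_mx 1 =
  k%:R *: dist_mx 0 + (k - b - 1)%N%:R *: dist_mx 1 + b%:R *: dist_mx 2.
Proof.
rewrite mul_adj_dist_mx; apply/matrixP => y z; rewrite !mxE.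
have := gdist_le3 taylor y z.
case: (d y z) => [|[|[|[|g]]]] // _; rewrite /nbr_count /bnum /cnum /=.
all: rewrite ?mulr1 ?mulr0 ?addr0 ?add0r //; congr (_%:R); lia.
Qed.

Lemma mul_dist_mx12 : dist_mx 1 *m dist_mx 2 =
  b%:R *: dist_mx 1 + (k - b - 1)%N%:R *: dist_mx 2 + k%:R *: dist_mx 3.
Proof.
rewrite mul_adj_dist_mx; apply/matrixP => y z; rewrite !mxE.
have := gdist_le3 taylor y z.
case: (d y z) => [|[|[|[|g]]]] // _; rewrite /nbr_count /bnum /cnum /=.
all: rewrite ?mulr1 ?mulr0 ?addr0 ?add0r //; congr (_%:R); lia.
Qed.

Lemma mul_dist_mx13 : dist_mx 1 *m dist_mx 3 = dist_mx 2.
Proof.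
rewrite mul_adj_dist_mx; apply/matrixP => y z; rewrite !mxE.
have := gdist_le3 taylor y z.
by case: (d y z) => [|[|[|[|g]]]] // _; rewrite /nbr_count /bnum /cnum /= ?subn0 ?subnn.
Qed.

Local Notation J := (const_mx 1 : 'M[algC]_N).

Lemma mul_dist_mx1_ones : dist_mx 1 *m J = k%:R *: J.
Proof.
apply/matrixP => y z; rewrite !mxE.
under eq_bigr do rewrite !mxE mulr1 (gdist1 taylor).
by rewrite sum_nat_of_bool (card_nbr taylor) mulr1.
Qed.

Lemma mul_dist_mx2_ones : dist_mx 2 *m J = k%:R *: J.
Proof.
have := mulmxA (dist_mx 1) (dist_mx 1) J.
rewrite mul_dist_mx1_ones -scalemxAr mul_dist_mx1_ones scalerA mul_dist_mx11.
rewrite !mulmxDl -!scalemxAl dist_mx0 mul1mx mul_dist_mx1_ones !scalerA -scalerDl => A11J.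
apply: (can_inj (scalerK b_neq0)).
apply: (addrI ((k%:R + (k - b - 1)%N%:R * k%:R) *: J)); rewrite -A11J scalerA -scalerDl.
by congr (_ *: J); rewrite {1}k_eq; ring.
Qed.

Lemma mul_dist_mx3_ones : dist_mx 3 *m J = J.
Proof.
have := mulmxA (dist_mx 1) (dist_mx 2) J.
rewrite mul_dist_mx2_ones -scalemxAr mul_dist_mx1_ones scalerA mul_dist_mx12.
rewrite !mulmxDl -!scalemxAl mul_dist_mx1_ones mul_dist_mx2_ones !scalerA -scalerDl => A12J.
apply: (can_inj (scalerK k_neq0)).
apply: (addrI ((b%:R * k%:R + (k - b - 1)%N%:R * k%:R) *: J)); rewrite -A12J -scalerDl.
by congr (_ *: J); rewrite {1}k_eq; ring.
Qed.

Lemma card_antipodes y : #|[set w | d y w == 3%N]| = 1%N.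
Proof.
move/matrixP: mul_dist_mx3_ones => /(_ y y); rewrite !mxE.
under eq_bigr do rewrite !mxE mulr1.
by rewrite sum_nat_of_bool => /eqP; rewrite pnatr_eq1 => /eqP.
Qed.

Definition antipode y := odflt y [pick w | d y w == 3%N].

Lemma gdist_eq3 y w : (d y w == 3%N) = (w == antipode y).
Proof.
have /eqP/cards1P[a def_a] := card_antipodes y.
have eq3_a w' : (d y w' == 3%N) = (w' == a) by rewrite -in_set1 -def_a inE.
rewrite /antipode; case: pickP => [v | none]; first by rewrite eq3_a => /eqP ->.
by have := none a; rewrite eq3_a eqxx.
Qed.

Lemma antipodeK : involutive antipode.
Proof. by move=> y; apply/eqP; rewrite eq_sym -gdist_eq3 (gdist_sym taylor) gdist_eq3. Qed.

Lemma mul_dist_mx3l (X : 'M[algC]_N) : dist_mx 3 *m X = \matrix_(y, z) X (antipode y) z.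
Proof.
apply/matrixP => y z; rewrite !mxE (bigD1 (antipode y)) //= big1 => [|w ne].
  by rewrite mxE gdist_eq3 eqxx mul1r addr0.
by rewrite mxE gdist_eq3 (negPf ne) mul0r.
Qed.

Lemma mul_dist_mx3r (X : 'M[algC]_N) : X *m dist_mx 3 = \matrix_(y, z) X y (antipode z).
Proof.
apply/matrixP => y z; rewrite !mxE (bigD1 (antipode z)) //= big1 => [|w ne].
  by rewrite mxE (gdist_sym taylor) gdist_eq3 eqxx mulr1 addr0.
by rewrite mxE (gdist_sym taylor) gdist_eq3 (negPf ne) mulr0.
Qed.

Lemma mul_dist_mx33 : dist_mx 3 *m dist_mx 3 = 1%:M.
Proof.
rewrite mul_dist_mx3l -dist_mx0; apply/matrixP => y z.
by rewrite !mxE gdist_eq3 antipodeK (gdist_eq0 taylor) eq_sym.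
Qed.

Lemma mul_dist_mx_antipodal h : (h <= 3)%N -> dist_mx h *m dist_mx 3 = dist_mx (3 - h)%N.
Proof.
case: h => [|[|[|[|h]]]] // _; first by rewrite dist_mx0 mul1mx.
- exact: mul_dist_mx13.
- by rewrite -mul_dist_mx13 -mulmxA mul_dist_mx33 mulmx1.
- by rewrite mul_dist_mx33 dist_mx0.
Qed.

Lemma gdist_antipode y z : d y (antipode z) = (3 - d y z)%N.
Proof.
have le3 := gdist_le3 taylor y (antipode z).
move/matrixP: (mul_dist_mx_antipodal le3) => /(_ y z); rewrite mul_dist_mx3r !mxE eqxx.
case: eqP => [dyz _ | _ /eqP]; first lia.
by rewrite eqr_nat.
Qed.

Lemma gdist_reflect a a' y z :
  d (if a then antipode y else y) (if a' then antipode z else z) = reflect3 (a (+) a') (d y z).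
Proof.
have le3 := gdist_le3 taylor; case: a a' => -[] /=; rewrite ?gdist_antipode //.
  by rewrite (gdist_sym taylor) gdist_antipode (gdist_sym taylor) subKn.
by rewrite (gdist_sym taylor) gdist_antipode (gdist_sym taylor).
Qed.

Lemma mem_dist_mx_subalg (W : 'A[algC]_N) h : (h <= 3)%N ->
    (1%:M \in W)%MS -> (dist_mx 1 \in W)%MS -> (W * W <= W)%MS ->
  (dist_mx h \in W)%MS.
Proof.
move=> le_h3 W1 WA /mulsmx_subP mulW.
have WA0 : (dist_mx 0 \in W)%MS by rewrite dist_mx0.
have WA2 : (dist_mx 2 \in W)%MS.
  rewrite -[dist_mx 2](scalerK b_neq0) memmxZ //.
  rewrite -[b%:R *: _](addKr (k%:R *: dist_mx 0 + (k - b - 1)%N%:R *: dist_mx 1)).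
  by rewrite -mul_dist_mx11 memmxD ?memmxN ?memmxD ?memmxZ ?mulW.
have WA3 : (dist_mx 3 \in W)%MS.
  rewrite -[dist_mx 3](scalerK k_neq0) memmxZ //.
  rewrite -[k%:R *: _](addKr (b%:R *: dist_mx 1 + (k - b - 1)%N%:R *: dist_mx 2)).
  by rewrite -mul_dist_mx12 memmxD ?memmxN ?memmxD ?memmxZ ?mulW.
by case: h le_h3 => [|[|[|[|]]]].
Qed.

End DistanceMatrices.

Section TripleMatrices.
Variables (N : nat) (e : rel 'I_N) (k b : nat).
Hypothesis taylor : taylor_array e k b.
Variable x : 'I_N.
Local Notation d := (gdist e).
Local Notation E := (dual_idem e x).
Local Notation A := (dist_mx e).
Local Notation P := (dist_mx e 3).

Definition triple_mx i j h : 'M[algC]_N :=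
  \matrix_(y, z) ((d x y == i) && (d x z == j) && (d y z == h))%:R.

Definition triangle i j h := [&& i <= j + h, j <= i + h & h <= i + j]%N.

Lemma dual_idem_diag i : E i = diag_mx (\row_y (d x y == i)%:R).
Proof.
apply/matrixP => y z; rewrite !mxE.
by case: (y =P z) => [-> | _] /=; rewrite ?mulr1n ?mulr0n.
Qed.

Lemma mul_dual_idem_mx i X j :
  E i *m X *m E j = \matrix_(y, z) (((d x y == i) && (d x z == j))%:R * X y z).
Proof.
rewrite !dual_idem_diag mul_diag_mx mul_mx_diag; apply/matrixP => y z; rewrite !mxE.
by rewrite mulrAC -natrM mulnb.
Qed.

Lemma dual_idem_dist_mx i j h : E i *m A h *m E j = triple_mx i j h.
Proof. by rewrite mul_dual_idem_mx; apply/matrixP => y z; rewrite !mxE -natrM mulnb. Qed.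

Lemma mul_dual_idem_triple i' i j h : E i' *m triple_mx i j h = (i' == i)%:R *: triple_mx i j h.
Proof.
rewrite dual_idem_diag mul_diag_mx; apply/matrixP => y z; rewrite !mxE.
by case: (d x y =P i) => [-> | _] /=; rewrite ?mulr0 // eq_sym.
Qed.

Lemma mul_triple_dual_idem i j h j' : triple_mx i j h *m E j' = (j == j')%:R *: triple_mx i j h.
Proof.
rewrite dual_idem_diag mul_mx_diag; apply/matrixP => y z; rewrite !mxE mulrC.
by case: (d x z =P j) => [-> | _] /=; rewrite ?andbF ?mulr0.
Qed.

Lemma mul_triple_mismatch i j h j' l h' :
  j != j' -> triple_mx i j h *m triple_mx j' l h' = 0.
Proof.
move=> ne; have := mul_triple_dual_idem i j h j; rewrite eqxx scale1r => <-.
by rewrite -mulmxA mul_dual_idem_triple (negPf ne) scale0r mulmx0.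
Qed.

Lemma triple_mx_eq0 i j h : ~~ triangle i j h -> triple_mx i j h = 0.
Proof.
move=> ntri; apply/matrixP => y z; rewrite !mxE.
case: (d x y =P i) => [dxy | _]; case: (d x z =P j) => [dxz | _];
  case: (d y z =P h) => [dyz | _] //=.
case/negP: ntri; rewrite -dxy -dxz -dyz; have := gdist_triangle taylor x y z.
have := gdist_triangle taylor x z y; have := gdist_triangle taylor y x z.
by rewrite (gdist_sym taylor z y) (gdist_sym taylor y x) => *; apply/and3P; split; lia.
Qed.

Lemma mul_dist_mx3_triple i j h : (i <= 3)%N -> (h <= 3)%N ->
  P *m triple_mx i j h = triple_mx (3 - i)%N j (3 - h)%N.
Proof.
move=> le_i3 le_h3; rewrite (mul_dist_mx3l taylor); apply/matrixP => y z; rewrite !mxE.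
rewrite (gdist_sym taylor (antipode e y) z) !(gdist_antipode taylor) (gdist_sym taylor z y).
by rewrite !subn3_eq ?(gdist_le3 taylor).
Qed.

Lemma mul_triple_dist_mx3 i j h : (j <= 3)%N -> (h <= 3)%N ->
  triple_mx i j h *m P = triple_mx i (3 - j)%N (3 - h)%N.
Proof.
move=> le_j3 le_h3; rewrite (mul_dist_mx3r taylor); apply/matrixP => y z; rewrite !mxE.
by rewrite !(gdist_antipode taylor) !subn3_eq ?(gdist_le3 taylor).
Qed.

Lemma trmx_triple i j h : (triple_mx i j h)^T = triple_mx j i h.
Proof. by apply/matrixP => y z; rewrite !mxE (gdist_sym taylor z y) [(_ == i) && _]andbC. Qed.

Lemma triple_mx_diag i : triple_mx i i 0 = E i.
Proof.
apply/matrixP => y z; rewrite !mxE (gdist_eq0 taylor).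
by case: (y =P z) => [-> | _]; rewrite /= ?andbb ?andbT ?andbF.
Qed.

Lemma sum_dual_idem : \sum_(i < 4) E i = 1%:M.
Proof.
apply/matrixP => y z; rewrite summxE.
have dxy : (d x y < 4)%N by rewrite ltnS (gdist_le3 taylor).
rewrite (bigD1 (Ordinal dxy)) //= big1 => [|i ne]; first by rewrite !mxE eqxx andbT addr0.
rewrite !mxE; case: (d x y =P i) => [dxy_i | _]; rewrite ?andbF //.
by move: ne; rewrite -val_eqE /= dxy_i eqxx.
Qed.

Lemma sum_mul_triple i l h h' :
  \sum_(j < 4) triple_mx i j h *m triple_mx j l h' = E i *m (A h *m A h') *m E l.
Proof.
rewrite -[A h]mulmx1 -sum_dual_idem !(mulmx_suml, mulmx_sumr); apply: eq_bigr => j _.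
have EE : E j *m E j = E j.
  by rewrite -{2}triple_mx_diag mul_dual_idem_triple eqxx scale1r triple_mx_diag.
by rewrite -!dual_idem_dist_mx -[E j in RHS]EE !mulmxA.
Qed.

Ltac simpl_triples :=
  repeat match goal with |- context [triple_mx ?i ?j ?h] => rewrite (@triple_mx_eq0 i j h isT) end;
  rewrite ?(mul0mx, mulmx0, scaler0, add0r, addr0).

Let sum_mul_triple11 i l :
  \sum_(j < 4) triple_mx i j 1 *m triple_mx j l 1 =
  k%:R *: triple_mx i l 0 + (k - b - 1)%N%:R *: triple_mx i l 1 + b%:R *: triple_mx i l 2.
Proof.
rewrite sum_mul_triple (mul_dist_mx11 taylor) !mulmxDr !mulmxDl -!scalemxAr -!scalemxAl.
by rewrite !dual_idem_dist_mx.
Qed.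

Let sum_mul_triple12 i l :
  \sum_(j < 4) triple_mx i j 1 *m triple_mx j l 2 =
  b%:R *: triple_mx i l 1 + (k - b - 1)%N%:R *: triple_mx i l 2 + k%:R *: triple_mx i l 3.
Proof.
rewrite sum_mul_triple (mul_dist_mx12 taylor) !mulmxDr !mulmxDl -!scalemxAr -!scalemxAl.
by rewrite !dual_idem_dist_mx.
Qed.

Lemma mul_triple_011_101 : triple_mx 0 1 1 *m triple_mx 1 0 1 = k%:R *: triple_mx 0 0 0.
Proof. by have := sum_mul_triple11 0 0; rewrite !big_ord_recr big_ord0 /=; simpl_triples. Qed.

Lemma mul_triple_011_111 :
  triple_mx 0 1 1 *m triple_mx 1 1 1 = (k - b - 1)%N%:R *: triple_mx 0 1 1.
Proof. by have := sum_mul_triple11 0 1; rewrite !big_ord_recr big_ord0 /=; simpl_triples. Qed.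

Lemma mul_triple_011_112 : triple_mx 0 1 1 *m triple_mx 1 1 2 = b%:R *: triple_mx 0 1 1.
Proof. by have := sum_mul_triple12 0 1; rewrite !big_ord_recr big_ord0 /=; simpl_triples. Qed.

Lemma mul_triple_111_101 :
  triple_mx 1 1 1 *m triple_mx 1 0 1 = (k - b - 1)%N%:R *: triple_mx 1 0 1.
Proof.
apply: trmx_inj; rewrite trmx_mul !trmx_triple mul_triple_011_111.
by rewrite linearZ /= trmx_triple.
Qed.

Lemma mul_triple_112_101 : triple_mx 1 1 2 *m triple_mx 1 0 1 = b%:R *: triple_mx 1 0 1.
Proof.
apply: trmx_inj; rewrite trmx_mul !trmx_triple mul_triple_011_112.
by rewrite linearZ /= trmx_triple.
Qed.

Lemma mul_triple_101_011 :
  triple_mx 1 0 1 *m triple_mx 0 1 1 = triple_mx 1 1 0 + triple_mx 1 1 1 + triple_mx 1 1 2.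
Proof.
apply/matrixP => y z; rewrite !mxE (bigD1 x) //= big1 => [|w ne]; last first.
  by rewrite !mxE !(gdist_eq0 taylor) [x == w]eq_sym (negPf ne) !andbF mul0r.
rewrite !mxE gdist_refl // (gdist_sym taylor y x) addr0 /=.
case: (d x y =P 1%N) => [dxy | _]; case: (d x z =P 1%N) => [dxz | _] /=;
  rewrite ?mul0r ?mulr0 ?addr0 //.
have := gdist_triangle taylor y x z; rewrite (gdist_sym taylor y x) dxy dxz.
by case: (d y z) => [|[|[|]]] //= _; rewrite ?addr0 ?add0r ?mulr1.
Qed.

Lemma local_graph_sq :
  triple_mx 1 0 1 *m triple_mx 0 1 1 + triple_mx 1 1 1 *m triple_mx 1 1 1 +
    triple_mx 1 1 2 *m triple_mx 1 1 2 =
  k%:R *: triple_mx 1 1 0 + (k - b - 1)%N%:R *: triple_mx 1 1 1 + b%:R *: triple_mx 1 1 2.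
Proof.
rewrite -sum_mul_triple11 !big_ord_recr big_ord0 /=; simpl_triples.
rewrite -(mul_triple_dist_mx3 1 (j := 1) (h := 2)) //.
rewrite -(mul_dist_mx3_triple 1 (i := 1) (h := 2)) //.
by rewrite -mulmxA (mulmxA P) (mul_dist_mx33 taylor) mul1mx.
Qed.

End TripleMatrices.

Section TerwilligerSpace.
Variables (N : nat) (e : rel 'I_N) (k b : nat).
Hypothesis taylor : taylor_array e k b.
Variable x : 'I_N.
Local Notation M := (triple_mx e x).
Local Notation P := (dist_mx e 3).

Definition base_triple (t : 'I_6) : nat * nat * nat :=
  nth (0, 0, 0) [:: (0, 0, 0); (0, 1, 1); (1, 0, 1); (1, 1, 0); (1, 1, 1); (1, 1, 2)]%N t.

(* [basis_triple (a, t, a')] is the index triple of P^a M_(base_triple t) P^a'. *)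
Definition basis_triple (c : bool * 'I_6 * bool) :=
  let: (a, t, a') := c in let: (i, j, h) := base_triple t in
  (reflect3 a i, reflect3 a' j, reflect3 (a (+) a') h).

Definition basis_mx c := let: (i, j, h) := basis_triple c in M i j h.

Definition terwilliger_span := span_mx basis_mx.
Local Notation V := terwilliger_span.

Lemma base_triple_small t : let: (i, j, h) := base_triple t in [&& i <= 1, j <= 1 & h <= 3]%N.
Proof. by case: t => -[|[|[|[|[|[|]]]]]]. Qed.

Lemma base_triple_onto i j h : (i <= 1)%N -> (j <= 1)%N -> (h <= 3)%N -> triangle i j h ->
  exists t, base_triple t = (i, j, h).
Proof.
case: i => [|[|//]] _; case: j => [|[|//]] _; case: h => [|[|[|[|//]]]] _ //=.
- by exists (@Ordinal 6 0 isT).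
- by exists (@Ordinal 6 1 isT).
- by exists (@Ordinal 6 2 isT).
- by exists (@Ordinal 6 3 isT).
- by exists (@Ordinal 6 4 isT).
- by exists (@Ordinal 6 5 isT).
Qed.

Lemma base_triple_inj : injective base_triple.
Proof. by move=> t t' /eqP; rewrite nth_uniq ?ltn_ord // => /eqP/val_inj. Qed.

Lemma basis_triple_inj : injective basis_triple.
Proof.
move=> [[a t] a'] [[c u] c']; rewrite /basis_triple.
have := base_triple_small t; have := base_triple_small u.
case Et: (base_triple t) => [[i j] h]; case Eu: (base_triple u) => [[i' j'] h'].
move=> /and3P[le_i' le_j' le_h'] /and3P[le_i le_j le_h] [].
move=> /reflect3_small_inj-/(_ le_i le_i')[<- ei] /reflect3_small_inj-/(_ le_j le_j')[<- ej].
by move=> /reflect3_inj-/(_ le_h le_h') eh; rewrite (@base_triple_inj t u) // Et Eu ei ej eh.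
Qed.

Lemma mul_dist_mx3_basis a t a' : P *m basis_mx (a, t, a') = basis_mx (~~ a, t, a').
Proof.
rewrite /basis_mx /=; have := base_triple_small t.
case: (base_triple t) => [[i j] h] /and3P[le_i le_j le_h].
rewrite (mul_dist_mx3_triple taylor) ?reflect3_le ?(leq_trans le_i) // addNb.
by rewrite !subn_reflect3 ?(leq_trans le_i).
Qed.

Lemma mul_basis_dist_mx3 a t a' : basis_mx (a, t, a') *m P = basis_mx (a, t, ~~ a').
Proof.
rewrite /basis_mx /=; have := base_triple_small t.
case: (base_triple t) => [[i j] h] /and3P[le_i le_j le_h].
rewrite (mul_triple_dist_mx3 taylor) ?reflect3_le ?(leq_trans le_j) // addbN.
by rewrite !subn_reflect3 ?(leq_trans le_j).
Qed.

Lemma memV_mulPl X : (X \in V)%MS -> (P *m X \in V)%MS.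
Proof.
apply: (span_mx_linear_closed (f := mulmx P)) => -[[a t] a'] /=.
by rewrite mul_dist_mx3_basis mem_span_mx.
Qed.

Lemma memV_mulPr X : (X \in V)%MS -> (X *m P \in V)%MS.
Proof.
apply: (span_mx_linear_closed (f := mulmxr P)) => -[[a t] a'] /=.
by rewrite mul_basis_dist_mx3 mem_span_mx.
Qed.

Lemma memV_triple i j h : (i <= 3)%N -> (j <= 3)%N -> (h <= 3)%N -> (M i j h \in V)%MS.
Proof.
have PP := mul_dist_mx33 taylor.
wlog le_i1 : i h / (i <= 1)%N.
  move=> base le_i3 le_j3 le_h3; have [le_i1 | lt1i] := leqP i 1; first exact: base.
  rewrite -[M i j h]mul1mx -PP -mulmxA (mul_dist_mx3_triple taylor) //.
  by apply/memV_mulPl/base; lia.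
move=> _; wlog le_j1 : j h / (j <= 1)%N.
  move=> base le_j3 le_h3; have [le_j1 | lt1j] := leqP j 1; first exact: base.
  rewrite -[M i j h]mulmx1 -PP mulmxA (mul_triple_dist_mx3 taylor) //.
  by apply/memV_mulPr/base; lia.
move=> _ le_h3; have [tri | ntri] := boolP (triangle i j h); last first.
  by rewrite (triple_mx_eq0 taylor) // mem0mx.
have [t Et] := base_triple_onto le_i1 le_j1 le_h3 tri.
by have := mem_span_mx basis_mx (false, t, false); rewrite /basis_mx /= Et /=.
Qed.

Ltac memV_comb :=
  repeat first [ apply: memmxD | apply: memmxN | apply: memmxZ | apply: mem0mx
               | by apply: memV_triple | assumption ].

Lemma memV_local_graph_mul h h' : (0 < h <= 2)%N -> (0 < h' <= 2)%N ->
  (M 1 1 h *m M 1 1 h' \in V)%MS.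
Proof.
(* J is the all-ones matrix on the neighbourhood of x; D and C are the
   adjacency matrices of the local graph and of its complement. *)
set D := M 1 1 1; set C := M 1 1 2; pose a : algC := (k - b - 1)%N%:R.
set J := M 1 0 1 *m M 0 1 1.
have J_def : J = M 1 1 0 + D + C by rewrite /J (mul_triple_101_011 taylor).
have VJ : (J \in V)%MS by rewrite J_def; memV_comb.
have JD : J *m D = a *: J by rewrite /J -mulmxA (mul_triple_011_111 taylor) scalemxAr.
have DJ : D *m J = a *: J by rewrite /J mulmxA (mul_triple_111_101 taylor) scalemxAl.
have CJ : C *m J = b%:R *: J by rewrite /J mulmxA (mul_triple_112_101 taylor) scalemxAl.
have E1r X : X = D \/ X = C -> X *m M 1 1 0 = X.
  by case=> ->; rewrite (triple_mx_diag taylor) mul_triple_dual_idem eqxx scale1r.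
have E1D : M 1 1 0 *m D = D.
  by rewrite (triple_mx_diag taylor) mul_dual_idem_triple eqxx scale1r.
have C_def : C = J - (M 1 1 0 + D) by rewrite J_def [M 1 1 0 + D + C]addrC addrK.
have CD_DD : C *m D + D *m D = a *: J - D.
  by rewrite {1}C_def mulmxBl mulmxDl JD E1D opprD addrA subrK.
have CC_CD : C *m C + C *m D = b%:R *: J - C.
  by rewrite {2}C_def mulmxBr mulmxDr CJ E1r ?opprD ?addrA ?subrK //; right.
have DC : D *m C = a *: J - D - D *m D.
  by rewrite C_def mulmxBr mulmxDr DJ E1r ?opprD ?addrA //; left.
have DD_CC : D *m D + C *m C = k%:R *: M 1 1 0 + a *: D + b%:R *: C - J.
  by apply: (addrI J); rewrite addrA (local_graph_sq taylor) subrKC.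
have VDD : (D *m D \in V)%MS.
  have two : 2%:R != 0 :> algC by rewrite pnatr_eq0.
  have -> : D *m D =
      2%:R^-1 *: ((D *m D + C *m C) - (C *m C + C *m D) + (C *m D + D *m D)).
    by rewrite opprD !addrA addrK subrK -mulr2n -scaler_nat scalerA mulVf ?scale1r.
  by rewrite DD_CC CC_CD CD_DD; memV_comb.
have VCD : (C *m D \in V)%MS by rewrite -[C *m D](addrK (D *m D)) CD_DD; memV_comb.
have VCC : (C *m C \in V)%MS by rewrite -[C *m C](addrK (C *m D)) CC_CD; memV_comb.
by move: h h' => [|[|[|h]]] [|[|[|h']]] //= _ _; rewrite ?DC; memV_comb.
Qed.

Lemma memV_mul_triple_small i j l h h' :
  (i <= 1)%N -> (j <= 1)%N -> (l <= 1)%N -> (h <= 3)%N -> (h' <= 3)%N ->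
  (M i j h *m M j l h' \in V)%MS.
Proof.
move=> le_i le_j le_l le_h le_h'.
have [tri | ntri] := boolP (triangle i j h); last first.
  by rewrite (triple_mx_eq0 taylor _ ntri) mul0mx mem0mx.
have [tri' | ntri'] := boolP (triangle j l h'); last first.
  by rewrite (triple_mx_eq0 taylor _ ntri') mulmx0 mem0mx.
have [h0 | h_gt0] := posnP h.
  move: tri; rewrite h0 /triangle => /and3P[? ? _]; have -> : i = j by lia.
  by rewrite (triple_mx_diag taylor) mul_dual_idem_triple eqxx scale1r memV_triple //; lia.
have [h'0 | h'_gt0] := posnP h'.
  move: tri'; rewrite h'0 /triangle => /and3P[? ? _]; have -> : l = j by lia.
  by rewrite (triple_mx_diag taylor) mul_triple_dual_idem eqxx scale1r memV_triple //; lia.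
move: tri tri' h_gt0 h'_gt0; rewrite /triangle.
case: i le_i => [|[|//]] _; case: j le_j => [|[|//]] _; case: l le_l => [|[|//]] _.
all: case: h le_h => [|[|[|[|//]]]] _; case: h' le_h' => [|[|[|[|//]]]] _ //= _ _ _ _.
all: rewrite ?(mul_triple_101_011 taylor) ?(mul_triple_011_101 taylor)
  ?(mul_triple_011_111 taylor) ?(mul_triple_011_112 taylor)
  ?(mul_triple_111_101 taylor) ?(mul_triple_112_101 taylor).
all: try by memV_comb.
all: exact: memV_local_graph_mul.
Qed.

Lemma memV_mul_triple i j l h h' :
  (i <= 3)%N -> (j <= 3)%N -> (l <= 3)%N -> (h <= 3)%N -> (h' <= 3)%N ->
  (M i j h *m M j l h' \in V)%MS.
Proof.
have PP := mul_dist_mx33 taylor.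
wlog le_i1 : i h / (i <= 1)%N.
  move=> base le_i3 le_j3 le_l3 le_h3 le_h'3.
  have [le_i1 | lt1i] := leqP i 1; first exact: base.
  rewrite -[M i j h]mul1mx -PP -(mulmxA P P) (mul_dist_mx3_triple taylor) // -mulmxA.
  by apply/memV_mulPl/base; lia.
wlog le_l1 : l h' / (l <= 1)%N.
  move=> base le_i3 le_j3 le_l3 le_h3 le_h'3.
  have [le_l1 | lt1l] := leqP l 1; first exact: base.
  rewrite -[M j l h']mulmx1 -PP (mulmxA (M j l h')) (mul_triple_dist_mx3 taylor) // mulmxA.
  by apply/memV_mulPr/base; lia.
wlog le_j1 : j h h' / (j <= 1)%N.
  move=> base le_i3 le_j3 le_l3 le_h3 le_h'3.
  have [le_j1 | lt1j] := leqP j 1; first exact: base.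
  rewrite -[M i j h]mulmx1 -PP (mulmxA (M i j h)) (mul_triple_dist_mx3 taylor) // -mulmxA.
  by rewrite (mul_dist_mx3_triple taylor) //; apply: base; lia.
by move=> *; apply: memV_mul_triple_small.
Qed.

Lemma memV_mul X Y : (X \in V)%MS -> (Y \in V)%MS -> (X *m Y \in V)%MS.
Proof.
apply: span_mx_mul_closed => c c'; rewrite /basis_mx.
have := base_triple_small c.1.2; have := base_triple_small c'.1.2.
case: c c' => [[a t] a'] [[u s] u'] /=.
case: (base_triple t) => [[i j] h]; case: (base_triple s) => [[i' j'] h'].
move=> /and3P[le_i' le_j' le_h'] /and3P[le_i le_j le_h].
have [<- | ne] := eqVneq (reflect3 a' j) (reflect3 u i'); last first.
  by rewrite mul_triple_mismatch // mem0mx.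
by apply: memV_mul_triple; apply: reflect3_le; lia.
Qed.

Lemma memV_dual_idem i : (i <= 3)%N -> (dual_idem e x i \in V)%MS.
Proof. by move=> le_i3; rewrite -(triple_mx_diag taylor) memV_triple. Qed.

Lemma memV_one : (1%:M \in V)%MS.
Proof.
rewrite -(sum_dual_idem taylor x) memmx_sum // => i _.
by rewrite memV_dual_idem // -ltnS.
Qed.

Lemma memV_adj : (adj_mx e \in V)%MS.
Proof.
rewrite (adj_mx_dist taylor) -[dist_mx e 1]mul1mx -[_ *m _]mulmx1.
rewrite -(sum_dual_idem taylor x).
rewrite !mulmx_suml memmx_sum // => i _; rewrite mulmx_sumr memmx_sum // => j _.
by rewrite dual_idem_dist_mx memV_triple // -ltnS.
Qed.

Lemma sub_terwilliger_span (W : 'A[algC]_N) :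
  (1%:M \in W)%MS -> (forall g, g \in terwilliger_gens e x -> (g \in W)%MS) ->
  (W * W <= W)%MS -> (V <= W)%MS.
Proof.
move=> W1 Wgens WW; move/mulsmx_subP: (WW) => mulW.
have WE i : (i <= 3)%N -> (dual_idem e x i \in W)%MS.
  by move=> le_i3; apply: Wgens; case: i le_i3 => [|[|[|[|]]]] // _; rewrite !inE eqxx ?orbT.
have WA1 : (dist_mx e 1 \in W)%MS by rewrite -(adj_mx_dist taylor) Wgens // inE eqxx.
apply/row_subP => r; rewrite rowK /basis_mx.
have := base_triple_small (enum_val r).1.2; case: (enum_val r) => [[a t] a'] /=.
case: (base_triple t) => [[i j] h] /and3P[le_i le_j le_h] /=.
rewrite -dual_idem_dist_mx; apply: (mulW); first apply: (mulW).
- by apply/WE/reflect3_le; lia.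
- exact/(mem_dist_mx_subalg taylor)/WW/WA1/W1/reflect3_le.
- by apply/WE/reflect3_le; lia.
Qed.

Lemma basis_mxE c y z :
  basis_mx c y z = ((gdist e x y, gdist e x z, gdist e y z) == basis_triple c)%:R.
Proof. by rewrite /basis_mx; case: (basis_triple c) => [[i j] h]; rewrite mxE !xpair_eqE. Qed.

Lemma exists_base_witness t :
  exists y z, (gdist e x y, gdist e x z, gdist e y z) = base_triple t.
Proof.
have [z1 exz1] : exists z1, e x z1.
  have : (0 < #|[set w | e x w]|)%N by rewrite (card_nbr taylor); case: taylor => ? _; lia.
  by case/card_gt0P => z1; rewrite inE; exists z1.
have dxw w : e x w -> gdist e x w = 1%N by move=> exw; apply/eqP; rewrite (gdist1 taylor).
have dxz1 := dxw z1 exz1.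
have dz1x : gdist e z1 x = 1%N by rewrite (gdist_sym taylor).
have [w1 /dxw dxw1 dw1] := exists_nbr_at_dist taylor (h := 1) exz1 isT.
have [w2 /dxw dxw2 dw2] := exists_nbr_at_dist taylor (h := 2) exz1 isT.
case: t => -[|[|[|[|[|[|//]]]]]] lt6.
- by exists x, x; rewrite gdist_refl.
- by exists x, z1; rewrite gdist_refl dxz1.
- by exists z1, x; rewrite gdist_refl dxz1 dz1x.
- by exists z1, z1; rewrite gdist_refl dxz1.
- by exists z1, w1; rewrite dxz1 dxw1 dw1.
- by exists z1, w2; rewrite dxz1 dxw2 dw2.
Qed.

Lemma exists_basis_witness c :
  exists y z, (gdist e x y, gdist e x z, gdist e y z) = basis_triple c.
Proof.
case: c => [[a t] a']; have [y [z Eyz]] := exists_base_witness t.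
exists (if a then antipode e y else y), (if a' then antipode e z else z).
rewrite /basis_triple -Eyz (gdist_reflect taylor false a) (gdist_reflect taylor false a').
by rewrite (gdist_reflect taylor).
Qed.

Lemma rank_terwilliger_span : \rank V = 24%N.
Proof.
rewrite rank_span_mx ?card_prod ?card_bool ?card_ord // => c.
have [y [z Eyz]] := exists_basis_witness c; exists (y, z) => c' /=.
by rewrite basis_mxE Eyz (inj_eq basis_triple_inj) eq_sym.
Qed.

End TerwilligerSpace.

Theorem proposition7p8 (N : nat) (e : rel 'I_N) (hT : is_taylor e) (x : 'I_N) :
  exists V : 'A[algC]_N,
    is_generated_subalgebra (terwilliger_gens e x) V /\ \rank V = 24%N.
Proof.
case: hT => k [b taylor]; exists <<terwilliger_span e x>>%MS.
rewrite genmxE (rank_terwilliger_span taylor); split => //; split.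
- by rewrite genmxE (memV_one taylor).
- move=> g; rewrite genmxE !inE => /orP[/eqP -> | ]; first exact: memV_adj taylor x.
  by case/or4P => /eqP ->; apply: (memV_dual_idem taylor).
- by apply/mulsmx_subP => X Y; rewrite !genmxE; exact: memV_mul taylor x X Y.
- by move=> W; rewrite genmxE; exact: sub_terwilliger_span taylor x W.
Qed.
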